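(* Let $a<b$ and let $f:[a,b]\rightarrow\mathbb{R}$ be a twice continuously differentiable mapping in $(a,b)$ with $f''\in L^2[a,b]$. Then \[ \left|\frac{f(a)+f(b)}{2}-\frac{1}{b-a}\int_{a}^{b}f(t)\,dt\right|\leq \frac{(b-a)^{3/2}}{2\sqrt{3}\pi}\|f''\|_2. \]
   Context: $\|g\|_2=\left(\int_a^b g(t)^2\,dt\right)^{1/2}$. *)

From HB Require Import structures.
From mathcomp Require Import all_boot all_order all_algebra.
From mathcomp Require Import all_classical all_reals all_analysis.
Set Implicit Arguments. Unset Strict Implicit. Unset Printing Implicit Defensive.
Import Order.TTheory GRing.Theory Num.Theory.
Import numFieldNormedType.Exports.
Local Open Scope classical_set_scope.
Local Open Scope ring_scope.

Definition L2norm (R : realType) (a b : R) (g : R -> R) : R :=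
  Num.sqrt (\int[@lebesgue_measure R]_(t in `[a, b]) (g t ^+ 2)).

Definition inL2 (R : realType) (a b : R) (g : R -> R) : Prop :=
  measurable_fun `[a, b] g /\
  (@lebesgue_measure R).-integrable `[a, b] (fun t => ((g t) ^+ 2)%:E).

From HB Require Import structures.
From mathcomp Require Import all_boot all_order all_algebra.
From mathcomp Require Import all_classical all_reals all_analysis.
From mathcomp Require Import ring lra.
Import Order.TTheory GRing.Theory Num.Theory.
Import numFieldNormedType.Exports.
Local Open Scope classical_set_scope.
Local Open Scope ring_scope.

Notation mu := (@lebesgue_measure _).

(* For [al, be] inside (a, b), integrating by parts twice against the Peano kernel
   K(t) = (t - al)(be - t)/2, which vanishes at both ends and has K'' = -1, gives
     (be - al)(f al + f be)/2 - \int_al^be f = \int_al^be K f''.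
   By Cauchy-Schwarz and \int_al^be K^2 = (be - al)^5/120 the trapezoid error is at most
   sqrt((be - al)^5/120) ||f''||_2.  Since f is only differentiable inside (a, b), the
   estimate on [a, b] follows by letting al -> a and be -> b, using continuity of f.
   It holds with constant 1/sqrt 120, and 1/sqrt 120 <= 1/(2 sqrt 3 pi) as pi^2 <= 10. *)

Lemma cos_lt_taylor4 (R : realType) (y : R) : 0 < y <= 1 ->
  cos y < 1 - y ^+ 2 / 2 + y ^+ 4 / 24.
Proof.
move=> /andP[y0 y1].
rewrite -(opprK (cos _)) ltrNl; have /cvgN cvg_series := @cvg_cos_coeff' R y.
rewrite -(cvg_lim (@Rhausdorff R) cvg_series).
apply: (@le_lt_trans _ _ (\sum_(0 <= i < 3) - cos_coeff' y i)).
  rewrite !big_nat_recl// big_nil addr0 /cos_coeff' /= !expr0z !factS fact0 /=.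
  rewrite -!exprnP /= expr1 sqrrN expr1n expr0; lra.
rewrite -seriesN lt_sum_lim_series //; first by move/cvgP: cvg_series; rewrite seriesN.
(* the tail pairs up as y^(2n)/(2n)! - y^(2n+2)/(2n+2)! > 0 with n odd *)
move=> d; set n := (3 + d.*2)%N.
have -> : (3 + d.*2.+1)%N = n.+1 by rewrite addnS.
have odd_n : odd n by rewrite /n oddD odd_double.
rewrite /cos_coeff' -!exprnP -[(-1) ^+ n]signr_odd -[(-1) ^+ n.+1]signr_odd oddS odd_n /=.
rewrite expr1 expr0 mulN1r mul1r doubleS mulNr opprK subr_gt0.
set m := n.*2.
have ym : 0 < y ^+ m by rewrite exprn_gt0.
apply: (@le_lt_trans _ _ (y ^+ m / (m.+2)`!%:R)).
  rewrite ler_wpM2r ?invr_ge0 ?ler0n//.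
  by apply: ler_wiXn2l => //; [exact: ltW | exact/ltnW/leqnSn].
rewrite ltr_pM2l // ltf_pV2 ?posrE ?ltr0n ?fact_gt0 // ltr_nat (factS m.+1) (factS m) mulnA.
by rewrite -[X in (X < _)%N]mul1n ltn_pmul2r ?fact_gt0.
Qed.

Lemma pi_le_79_25 (R : realType) : pi <= 79 / 25 :> R.
Proof.
pose y : R := 79 / 100.
have cos_y_lt : cos y < 7042 / 10000.
  apply: (lt_le_trans (@cos_lt_taylor4 R y _)); rewrite /y; lra.
have cos_y_gt0 : 0 < cos y.
  by apply: cos_gt0_pihalf; have := @pihalf_ge1 R; rewrite /y; lra.
have cos_2y_lt0 : cos (y *+ 2) < 0.
  rewrite cos_mulr2n subr_lt0.
  have : cos y ^+ 2 < (7042 / 10000) ^+ 2 by rewrite ltrXn2r // ltW.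
  lra.
(* cos is positive on [0, pi/2), yet cos (79/50) < 0 *)
rewrite leNgt; apply/negP => pi_gt.
suff : 0 < cos (y *+ 2) by lra.
by apply: cos_gt0_pihalf; rewrite /y; lra.
Qed.

Lemma two_sqrt3_pi_le_sqrt120 (R : realType) : 2 * Num.sqrt 3 * pi <= Num.sqrt 120 :> R.
Proof.
have pi_gt0 := @pi_gt0 R; have pi_le := pi_le_79_25 R.
rewrite -(@ler_pXn2r _ 2) // ?nnegrE ?sqrtr_ge0 ?mulr_ge0 ?sqrtr_ge0 ?ltW //.
rewrite !exprMn !sqr_sqrtr //; nra.
Qed.

Lemma trapezoid_constant_le (R : realType) (L : R) : 0 < L ->
  L^-1 * Num.sqrt (L ^+ 5 / 120) <= L `^ (3 / 2) / (2 * Num.sqrt 3 * pi).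
Proof.
move=> L0; set s := Num.sqrt L.
have s0 : 0 < s by rewrite sqrtr_gt0.
have Ls : L = s ^+ 2 by rewrite sqr_sqrtr // ltW.
have -> : L `^ (3 / 2) = s ^+ 3.
  rewrite (_ : 3 / 2 = 1 + 2^-1); last by field.
  rewrite powRD; last by rewrite gt_eqF // implybT.
  by rewrite powRr1 ?ltW // powR12_sqrt ?ltW // -/s Ls exprS mulrC.
have -> : Num.sqrt (L ^+ 5 / 120) = s ^+ 5 / Num.sqrt 120.
  rewrite sqrtrM ?exprn_ge0 ?ltW // sqrtrV // Ls -exprM mulnC exprM sqrtr_sqr.
  by rewrite ger0_norm // exprn_ge0 // ltW.
have -> : L^-1 * (s ^+ 5 / Num.sqrt 120) = s ^+ 3 / Num.sqrt 120.
  by rewrite Ls; field; rewrite !gt_eqF // sqrtr_gt0.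
have pi_gt0 := @pi_gt0 R.
rewrite ler_pM2l ?exprn_gt0 // lef_pV2 ?posrE ?sqrtr_gt0 ?mulr_gt0 //.
exact: two_sqrt3_pi_le_sqrt120.
Qed.

Section RintegralFacts.
Context {R : realType}.
Implicit Types (al be : R) (h k g : R -> R).

Lemma continuous_Rintegrable {al be h} :
  (forall x, al <= x <= be -> {for x, continuous h}) ->
  mu.-integrable `[al, be] (EFin \o h).
Proof.
move=> ch; apply: continuous_compact_integrable; first exact: segment_compact.
by apply: continuous_in_subspaceT => x; rewrite inE /= in_itv /=; exact: ch.
Qed.

Lemma Rintegral_is_derive {al be} {F h : R -> R} : al < be ->
  (forall x, al <= x <= be -> is_derive x 1 F (h x)) ->
  (forall x, al <= x <= be -> {for x, continuous h}) ->
  \int[mu]_(x in `[al, be]) h x = F be - F al.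
Proof.
move=> albe dF ch.
have cF x : al <= x <= be -> {for x, continuous F}.
  move=> hx; apply: differentiable_continuous; apply/derivable1_diffP.
  by have [] := dF x hx.
have albe_le : al <= al <= be /\ al <= be <= be by rewrite !lexx ltW.
rewrite /Rintegral (@continuous_FTC2 _ h F) //.
- by apply: continuous_in_subspaceT => x; rewrite inE /= in_itv /=; exact: ch.
- split.
  + move=> x; rewrite in_itv /= => /andP[? ?].
    by have [] := dF x _; first by rewrite !ltW.
  + exact/cvg_at_right_filter/cF/albe_le.1.
  + exact/cvg_at_left_filter/cF/albe_le.2.
- move=> x; rewrite in_itv /= => /andP[? ?].
  by rewrite derive1E; apply: derive_val; apply: dF; rewrite !ltW.
Qed.

Lemma Rintegral_sqr_le_subitv a b al be g : a <= al -> be <= b ->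
  mu.-integrable `[a, b] (fun t => (g t ^+ 2)%:E) ->
  \int[mu]_(t in `[al, be]) (g t ^+ 2) <= \int[mu]_(t in `[a, b]) (g t ^+ 2).
Proof.
move=> aal beb ig.
have sub : `[al, be] `<=` `[a, b] by apply: subset_itv; rewrite bnd_simp.
have ig' : mu.-integrable `[al, be] (fun t => (g t ^+ 2)%:E) by exact: integrableS ig.
rewrite /Rintegral; apply: fine_le; try exact: integrable_fin_num.
apply: ge0_subset_integral => //; first exact: measurable_int ig.
by move=> x _; rewrite lee_fin sqr_ge0.
Qed.

Lemma Rintegral_itv_diff {a b al be h} : a <= al -> al < be -> be <= b ->
  mu.-integrable `[a, b] (EFin \o h) ->
  \int[mu]_(t in `[al, be]) h t =
  \int[mu]_(t in `[a, be]) h t - \int[mu]_(t in `[a, al]) h t.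
Proof.
move=> aal albe beb ih.
have ih' : mu.-integrable `[a, be] (EFin \o h).
  by apply: integrableS ih => //; apply: subset_itv; rewrite bnd_simp.
rewrite Rintegral_itvB //; last by rewrite bnd_simp ltW.
rewrite Rintegral_itv_obnd_cbnd //.
by apply: integrableS ih' => //; apply: subset_itv; rewrite bnd_simp.
Qed.

Lemma normrM_le_AMGM (s p q : R) : 0 < s ->
  `|p * q| <= (s * p ^+ 2 + s^-1 * q ^+ 2) / 2.
Proof.
move=> s0; rewrite normrM -(real_normK (num_real p)) -(real_normK (num_real q)).
set P := `|p|; set Q := `|q|.
have -> : s * P ^+ 2 + s^-1 * Q ^+ 2 = (s * P - Q) ^+ 2 * s^-1 + 2 * (P * Q).
  by field; rewrite gt_eqF.
have : 0 <= (s * P - Q) ^+ 2 * s^-1 by rewrite mulr_ge0 ?sqr_ge0 ?invr_ge0 ?ltW.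
lra.
Qed.

Lemma le_sqrtM_AMGM (I A B : R) : 0 < A -> 0 <= B ->
  (forall s, 0 < s -> I <= (s * A + s^-1 * B) / 2) ->
  I <= Num.sqrt A * Num.sqrt B.
Proof.
move=> A0 B0; have [->|B_neq0] := eqVneq B 0 => amgm.
  rewrite sqrtr0 mulr0; apply/ler_addgt0Pr => e e0; rewrite add0r.
  have e_gt0 : 0 < 2 * e / A by rewrite divr_gt0 // mulr_gt0.
  have := amgm _ e_gt0; rewrite mulr0 addr0.
  by have -> : 2 * e / A * A / 2 = e by field; rewrite gt_eqF.
(* the optimal parameter is s = sqrt (B / A) *)
have B_gt0 : 0 < B by rewrite lt_def B_neq0 B0.
set u := Num.sqrt A; set v := Num.sqrt B.
have u0 : 0 < u by rewrite sqrtr_gt0.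
have v0 : 0 < v by rewrite sqrtr_gt0.
have -> : u * v = (v / u * A + (v / u)^-1 * B) / 2.
  rewrite -[A](sqr_sqrtr (ltW A0)) -[B](sqr_sqrtr B0) -/u -/v.
  by field; rewrite !gt_eqF.
exact/amgm/divr_gt0.
Qed.

Lemma Rintegral_Cauchy_Schwarz al be k g :
  (forall x, al <= x <= be -> {for x, continuous k}) ->
  (forall x, al <= x <= be -> {for x, continuous g}) ->
  0 < \int[mu]_(t in `[al, be]) (k t ^+ 2) ->
  `|\int[mu]_(t in `[al, be]) (k t * g t)| <=
  Num.sqrt (\int[mu]_(t in `[al, be]) (k t ^+ 2)) *
  Num.sqrt (\int[mu]_(t in `[al, be]) (g t ^+ 2)).
Proof.
move=> ck cg k2_gt0.
have cM (h1 h2 : R -> R) x : {for x, continuous h1} -> {for x, continuous h2} ->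
    {for x, continuous (fun t => h1 t * h2 t)}.
  exact: cvgM.
have ck2 x (hx : al <= x <= be) : {for x, continuous (fun t => k t ^+ 2)}.
  exact: cM (ck x hx) (ck x hx).
have cg2 x (hx : al <= x <= be) : {for x, continuous (fun t => g t ^+ 2)}.
  exact: cM (cg x hx) (cg x hx).
have cAMGM (s : R) x (hx : al <= x <= be) :
    {for x, continuous (fun t => s * k t ^+ 2 + s^-1 * g t ^+ 2)}.
  by apply: cvgD; [exact: cM (cvg_cst _) (ck2 x hx) | exact: cM (cvg_cst _) (cg2 x hx)].
have ik2 := continuous_Rintegrable ck2; have ig2 := continuous_Rintegrable cg2.
apply: le_sqrtM_AMGM => //; first by apply: Rintegral_ge0 => x _; exact: sqr_ge0.
move=> s s0; apply: le_trans (le_normr_Rintegral _ _) _ => //.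
  by apply: continuous_Rintegrable => x hx; exact: cM (ck x hx) (cg x hx).
have iks : mu.-integrable `[al, be] (EFin \o (fun t => s * k t ^+ 2)).
  by apply: continuous_Rintegrable => x hx; exact: cM (cvg_cst _) (ck2 x hx).
have igs : mu.-integrable `[al, be] (EFin \o (fun t => s^-1 * g t ^+ 2)).
  by apply: continuous_Rintegrable => x hx; exact: cM (cvg_cst _) (cg2 x hx).
rewrite -[s * _]RintegralZl // -[s^-1 * _]RintegralZl // -RintegralD //.
rewrite -RintegralZr //; last exact: continuous_Rintegrable (cAMGM s).
apply: le_Rintegral => //; last by move=> x _; exact: normrM_le_AMGM.
- apply: continuous_Rintegrable => x hx; apply: cvg_norm.
  exact: cM (ck x hx) (cg x hx).
- apply: continuous_Rintegrable => x hx.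
  exact: cM (cAMGM s x hx) (cvg_cst _).
Qed.

End RintegralFacts.

Definition peano_kernel {R : realType} (al be t : R) : R := (t - al) * (be - t) / 2.

Section PeanoKernel.
Context {R : realType}.
Implicit Types al be x : R.

Lemma is_derive_peano_kernel al be x :
  is_derive x 1 (peano_kernel al be) ((al + be) / 2 - x).
Proof.
rewrite /peano_kernel; apply: is_derive_eq.
by rewrite !scaler0 add0r -![_ *: _]/(_ * _); lra.
Qed.

Lemma continuous_peano_kernel al be x : {for x, continuous (peano_kernel al be)}.
Proof.
apply: differentiable_continuous; apply/derivable1_diffP.
by have [] := is_derive_peano_kernel al be x.
Qed.

Lemma Rintegral_peano_kernel_sqr {al be} : al < be ->
  \int[mu]_(t in `[al, be]) (peano_kernel al be t ^+ 2) = (be - al) ^+ 5 / 120.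
Proof.
move=> albe.
pose P t := ((be - al) ^+ 2 * (t - al) ^+ 3 / 3
             - (be - al) * (t - al) ^+ 4 / 2 + (t - al) ^+ 5 / 5) / 4.
have dP x : al <= x <= be -> is_derive x 1 P (peano_kernel al be x ^+ 2).
  move=> _; rewrite /P /peano_kernel; apply: is_derive_eq.
  by rewrite !scaler0 -![_ *: _]/(_ * _); field.
have cK2 x : al <= x <= be -> {for x, continuous (fun t => peano_kernel al be t ^+ 2)}.
  by move=> _; apply: cvgM; exact: continuous_peano_kernel.
by rewrite (Rintegral_is_derive albe dP cK2) /P; field.
Qed.

End PeanoKernel.

Section TrapezoidInterior.
Context {R : realType} {a b : R} {f : R -> R}.
Hypothesis df : forall x, a < x < b -> derivable f x 1.
Hypothesis d2f : forall x, a < x < b -> derivable (derive1 f) x 1.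
Hypothesis cd2f : forall x, a < x < b -> {for x, continuous (derive1 (derive1 f))}.

Lemma trapezoid_peano_identity {al be} : a < al -> al < be -> be < b ->
  \int[mu]_(t in `[al, be]) (peano_kernel al be t * derive1 (derive1 f) t)
  = (be - al) * (f al + f be) / 2 - \int[mu]_(t in `[al, be]) f t.
Proof.
move=> aal albe beb.
have inab x : al <= x <= be -> a < x < b by move=> /andP[? ?]; apply/andP; split; lra.
set f1 := derive1 f; set f2 := derive1 f1.
have df1 x : al <= x <= be -> is_derive x 1 f (f1 x).
  by move=> /inab hx; rewrite /f1 derive1E; exact/derivableP/df.
have df2 x : al <= x <= be -> is_derive x 1 f1 (f2 x).
  by move=> /inab hx; rewrite /f2 derive1E; exact/derivableP/d2f.
have cf x : al <= x <= be -> {for x, continuous f}.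
  move=> hx; apply: differentiable_continuous; apply/derivable1_diffP.
  by have [] := df1 x hx.
have cKf2 x : al <= x <= be -> {for x, continuous (fun t => peano_kernel al be t * f2 t)}.
  by move=> hx; apply: cvgM; [exact: continuous_peano_kernel | exact/cd2f/inab].
(* two integrations by parts at once: K'' = -1 and K vanishes at al and be *)
pose F t := peano_kernel al be t * f1 t - ((al + be) / 2 - t) * f t.
have dF x : al <= x <= be -> is_derive x 1 F (peano_kernel al be x * f2 x + f x).
  move=> hx; have := is_derive_peano_kernel al be x.
  have := df1 x hx; have := df2 x hx; move=> ? ? ?.
  by apply: is_derive_eq; rewrite -![_ *: _]/(_ * _); ring.
have ch x (hx : al <= x <= be) :
    {for x, continuous (fun t => peano_kernel al be t * f2 t + f t)}.
  exact: cvgD (cKf2 x hx) (cf x hx).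
have eF : F be - F al = (be - al) * (f al + f be) / 2.
  by rewrite /F /peano_kernel; field.
rewrite -eF -(Rintegral_is_derive albe dF ch) RintegralD //.
- by rewrite addrK.
- exact: continuous_Rintegrable cKf2.
- exact: continuous_Rintegrable cf.
Qed.

Lemma trapezoid_error_le {al be} : a < al -> al < be -> be < b ->
  inL2 a b (derive1 (derive1 f)) ->
  `|(be - al) * (f al + f be) / 2 - \int[mu]_(t in `[al, be]) f t|
  <= Num.sqrt ((be - al) ^+ 5 / 120) * L2norm a b (derive1 (derive1 f)).
Proof.
move=> aal albe beb [_ if2].
have inab x : al <= x <= be -> a < x < b by move=> /andP[? ?]; apply/andP; split; lra.
rewrite -trapezoid_peano_identity // -(Rintegral_peano_kernel_sqr albe).
apply: le_trans.
  apply: Rintegral_Cauchy_Schwarz.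
  - by move=> x _; exact: continuous_peano_kernel.
  - by move=> x hx; exact/cd2f/inab.
  - by rewrite Rintegral_peano_kernel_sqr // divr_gt0 // exprn_gt0 // subr_gt0.
apply: ler_wpM2l; first exact: sqrtr_ge0.
rewrite ler_sqrt; last by apply: Rintegral_ge0 => x _; exact: sqr_ge0.
by apply: Rintegral_sqr_le_subitv; rewrite // ltW.
Qed.

End TrapezoidInterior.

Section EndpointLimits.
Context {R : realType}.
Implicit Types (phi p q : R -> R) (a b C : R).

Lemma normr_le_at_right phi {x0 y M : R} : x0 < y -> phi @ x0^'+ --> phi x0 ->
  (forall x, x0 < x < y -> `|phi x| <= M) -> `|phi x0| <= M.
Proof.
move=> x0y phi_cvg phi_le; apply: (cvgr_to_le (cvg_norm phi_cvg)).
near=> x; apply: phi_le; apply/andP; split; near: x.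
- exact: nbhs_right_gt.
- exact: nbhs_right_lt.
Unshelve. all: by end_near. Qed.

Lemma normr_le_at_left phi {x0 y M : R} : y < x0 -> phi @ x0^'- --> phi x0 ->
  (forall x, y < x < x0 -> `|phi x| <= M) -> `|phi x0| <= M.
Proof.
move=> yx0 phi_cvg phi_le; apply: (cvgr_to_le (cvg_norm phi_cvg)).
near=> x; apply: phi_le; apply/andP; split; near: x.
- exact: nbhs_left_gt.
- exact: nbhs_left_lt.
Unshelve. all: by end_near. Qed.

Lemma trapezoid_bound_closure {p q a b C} : a < b ->
  {within `[a, b], continuous p} -> {within `[a, b], continuous q} ->
  (forall al be, a < al -> al < be -> be < b ->
     `|(be - al) * (p al + p be) / 2 - (q be - q al)| <= C) ->
  `|(b - a) * (p a + p b) / 2 - (q b - q a)| <= C.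
Proof.
move=> ab cp cq inner.
pose E al be := (be - al) * (p al + p be) / 2 - (q be - q al).
have [_ pa pb] := (continuous_within_itvP _ ab).1 cp.
have [_ qa qb] := (continuous_within_itvP _ ab).1 cq.
have left_closed be : a < be -> be < b -> `|E a be| <= C.
  move=> abe beb; apply: (normr_le_at_right (E^~ be) abe); last first.
    by move=> al /andP[? ?]; exact: inner.
  rewrite /E; apply: cvgB; last by apply: cvgB; [exact: cvg_cst | exact: qa].
  apply: cvgM; last exact: cvg_cst.
  apply: cvgM; last by apply: cvgD; [exact: pa | exact: cvg_cst].
  by apply: cvgB; [exact: cvg_cst | exact: cvg_at_right_filter cvg_id].
apply: (normr_le_at_left (E a) ab); last by move=> be /andP[? ?]; exact: left_closed.
rewrite /E; apply: cvgB; last by apply: cvgB; [exact: qb | exact: cvg_cst].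
apply: cvgM; last exact: cvg_cst.
apply: cvgM; last by apply: cvgD; [exact: cvg_cst | exact: pb].
by apply: cvgB; [exact: cvg_at_left_filter cvg_id | exact: cvg_cst].
Qed.

End EndpointLimits.

Theorem corollary2p6 (R : realType) (a b : R) (f : R -> R) :
  a < b ->
  {within `[a, b], continuous f} ->
  (forall x, a < x < b -> derivable f x 1) ->
  (forall x, a < x < b -> derivable (derive1 f) x 1) ->
  (forall x, a < x < b -> {for x, continuous (derive1 (derive1 f))}) ->
  inL2 a b (derive1 (derive1 f)) ->
  `| (f a + f b) / 2 - (b - a)^-1 * \int[@lebesgue_measure R]_(t in `[a, b]) f t |
    <= (b - a) `^ (3 / 2) / (2 * Num.sqrt 3 * pi) * L2norm a b (derive1 (derive1 f)).
Proof.
move=> ab cf df d2f cd2f f2_L2.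
set N := L2norm a b (derive1 (derive1 f)).
have L0 : 0 < b - a by rewrite subr_gt0.
have intf : mu.-integrable `[a, b] (EFin \o f).
  by apply: continuous_compact_integrable => //; exact: segment_compact.
pose Phi x := \int[mu]_(t in `[a, x]) f t.
have cPhi : {within `[a, b], continuous Phi}.
  exact: parameterized_integral_continuous (ltW ab) intf.
have inner al be : a < al -> al < be -> be < b ->
    `|(be - al) * (f al + f be) / 2 - (Phi be - Phi al)| <= Num.sqrt ((b - a) ^+ 5 / 120) * N.
  move=> aal albe beb; rewrite /Phi -(Rintegral_itv_diff (ltW aal) albe (ltW beb) intf).
  apply: le_trans (trapezoid_error_le df d2f cd2f aal albe beb f2_L2) _.
  rewrite ler_wpM2r ?sqrtr_ge0 // ler_sqrt; last by rewrite divr_ge0 // exprn_ge0 // ltW.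
  by rewrite ler_pM2r // lerXn2r ?nnegrE; lra.
have := trapezoid_bound_closure ab cf cPhi inner.
rewrite /Phi set_itv1 Rintegral_set1 subr0 => bound.
have -> : (f a + f b) / 2 - (b - a)^-1 * \int[mu]_(t in `[a, b]) f t
    = (b - a)^-1 * ((b - a) * (f a + f b) / 2 - \int[mu]_(t in `[a, b]) f t).
  by field; rewrite gt_eqF.
have inv_ge0 : 0 <= (b - a)^-1 by rewrite invr_ge0 ltW.
rewrite normrM ger0_norm //; apply: le_trans (ler_wpM2l inv_ge0 bound) _.
rewrite mulrA ler_wpM2r ?sqrtr_ge0 //; exact: trapezoid_constant_le.
Qed.
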